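(* Let $M\geq N\geq 1$ and let $\rho=\epsilon\,|\psi\rangle\langle\psi|+\frac{1-\epsilon}{MN}I$ be a state on $\mathbb{C}^M\otimes\mathbb{C}^N$, where $0<\epsilon\leq 1$ and $|\psi\rangle$ is a unit vector with Schmidt decomposition $|\psi\rangle=\sum_{k=0}^{N-1}a_k|k\rangle_A\otimes|k\rangle_B$ ($a_k\geq 0$, $\sum_k a_k^2=1$). Let $a_m=\max_k a_k$. Then $$d_{\max}(\rho)=\begin{cases}\epsilon & \text{if } a_m^2\leq \tfrac12,\\ 2\epsilon\, a_m\sqrt{1-a_m^2} & \text{otherwise.}\end{cases}$$
   Context: For a state $\rho$ on $\mathbb{C}^M\otimes\mathbb{C}^N$ let $\rho_B=\mathrm{Tr}_A(\rho)$. A unitary $U^B$ on $\mathbb{C}^N$ is called cyclic (locally noneffective) for $\rho$ if $[\rho_B,U^B]=0$. Set $\rho_f=(I\otimes U^B)\rho(I\otimes U^{B\dagger})$ and define the Fu distance $d(\rho,U^B)=\frac{1}{\sqrt2}\|\rho-\rho_f\|_F$, where $\|X\|_F=\sqrt{\mathrm{Tr}(X^\dagger X)}$ is the Frobenius norm. Define $d_{\max}(\rho)=\max\{d(\rho,U^B): U^B \text{ unitary on } \mathbb{C}^N,\ [\rho_B,U^B]=0\}$. *)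

From HB Require Import structures.
From mathcomp Require Import all_boot all_order all_algebra.
From mathcomp Require Import complex mxtens.
Set Implicit Arguments. Unset Strict Implicit. Unset Printing Implicit Defensive.
Import Order.TTheory GRing.Theory Num.Theory.
Local Open Scope ring_scope.
Local Open Scope complex_scope.

Section QDefs.
Variable R : rcfType.
Local Notation C := R[i].

Definition adjmx {m n} (A : 'M[C]_(m, n)) : 'M[C]_(n, m) := (map_mx conjc A)^T.

Definition unitary {n} (U : 'M[C]_n) : Prop := U *m adjmx U = 1%:M.

Definition frob {n} (X : 'M[C]_n) : C := sqrtC (\tr (adjmx X *m X)).

(* partial trace over the first factor A of C^M (x) C^N
   (row-major tensor indexing, as in [tensmx]) *)
Definition ptraceA {M N} (rho : 'M[C]_(M * N)) : 'M[C]_N :=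
  \matrix_(j, l) \sum_(i < M) rho (mxtens_index (i, j)) (mxtens_index (i, l)).

Definition fu_dist {M N} (rho : 'M[C]_(M * N)) (U : 'M[C]_N) : C :=
  let W : 'M[C]_(M * N) := (1%:M : 'M[C]_M) *t U in
  frob (rho - W *m rho *m adjmx W) / sqrtC 2.

Definition cyclic_for {M N} (rho : 'M[C]_(M * N)) (U : 'M[C]_N) : Prop :=
  unitary U /\ ptraceA rho *m U = U *m ptraceA rho.

Definition is_dmax {M N} (rho : 'M[C]_(M * N)) (v : C) : Prop :=
  (exists U, cyclic_for rho U /\ fu_dist rho U = v) /\
  (forall U, cyclic_for rho U -> fu_dist rho U <= v).

(* the vector sum_k a_k |e_k>_A (x) |f_k>_B, with e_k = column k of EA,
   f_k = column k of EB *)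
Definition schmidt_vec {M N} (a : 'I_N -> R) (EA : 'M[C]_(M, N)) (EB : 'M[C]_N)
  : 'cV[C]_(M * N) :=
  \sum_(k < N) (a k)%:C *: (col k EA *t col k EB).

Definition iso_state {M N} (eps : R) (psi : 'cV[C]_(M * N)) : 'M[C]_(M * N) :=
  eps%:C *: (psi *m adjmx psi) + ((1 - eps) / (M * N)%:R)%:C *: 1%:M.

End QDefs.

From HB Require Import structures.
From mathcomp Require Import all_boot all_order all_algebra.
From mathcomp Require Import complex mxtens.
From mathcomp Require Import ring lra.
Import Order.TTheory GRing.Theory Num.Theory.
Local Open Scope ring_scope.
Local Open Scope complex_scope.
Set Implicit Arguments. Unset Strict Implicit. Unset Printing Implicit Defensive.

(* A local unitary
   [W = I (x) U] fixes the identity part, so [d(rho, U) = eps sqrt (1 - |o|^2)] where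
   [o = <psi| W |psi>], and [U] is cyclic iff it commutes with the reduced state
   [EB diag(a_k^2) EB^*] of [psi].  In the Schmidt basis [o = \sum_k a_k^2 V_kk] with
   [V] unitary, so [d_max] is reached by minimizing [|o|].  If every [a_k^2 <= 1/2],
   the weights [a_k^2] are the sides of a closed polygon in the plane, and the
   diagonal phases [V = diag(p)] read off it give [o = 0].  If [a_m^2 > 1/2], then
   [a_m^2] is a simple eigenvalue, so [V] fixes [e_m] up to a phase and
   [|o| >= a_m^2 - (1 - a_m^2)], with equality for the phase flip of [e_m]. *)

Section Adjoint.
Variable R : rcfType.
Local Notation C := R[i].

Lemma adjmxK m n (A : 'M[C]_(m, n)) : adjmx (adjmx A) = A.
Proof. by apply/matrixP=> i j; rewrite !mxE conjcK. Qed.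

Lemma adjmx_mul m n p (A : 'M[C]_(m, n)) (B : 'M[C]_(n, p)) :
  adjmx (A *m B) = adjmx B *m adjmx A.
Proof. by rewrite /adjmx map_mxM trmx_mul. Qed.

Lemma adjmxB m n (A B : 'M[C]_(m, n)) : adjmx (A - B) = adjmx A - adjmx B.
Proof. by rewrite /adjmx map_mxB linearB. Qed.

Lemma adjmxZ m n c (A : 'M[C]_(m, n)) : adjmx (c *: A) = conjc c *: adjmx A.
Proof. by rewrite /adjmx map_mxZ linearZ. Qed.

Lemma adjmx1 n : adjmx (1%:M : 'M[C]_n) = 1%:M.
Proof. by rewrite /adjmx map_mx1 trmx1. Qed.

Lemma adjmx_tr m n (A : 'M[C]_(m, n)) : adjmx A^T = map_mx conjc A.
Proof. by rewrite /adjmx map_trmx trmxK. Qed.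

Lemma adjmx_tens m n p q (A : 'M[C]_(m, n)) (B : 'M[C]_(p, q)) :
  adjmx (A *t B) = adjmx A *t adjmx B.
Proof. by rewrite /adjmx map_mxT trmx_tens. Qed.

Lemma adjmx_diag n (d : 'rV[C]_n) : adjmx (diag_mx d) = diag_mx (map_mx conjc d).
Proof.
apply/matrixP=> i j; rewrite !mxE rmorphMn /= eq_sym.
by have [->|] := eqVneq i j; rewrite ?mulr0n ?mulr1n.
Qed.

Lemma adjmx_diag_real n (f : 'I_n -> R) :
  adjmx (diag_mx (\row_k (f k)%:C)) = diag_mx (\row_k (f k)%:C).
Proof. by rewrite adjmx_diag; congr diag_mx; apply/rowP=> k; rewrite !mxE conjc_real. Qed.

Lemma tensmx11 m n : (1%:M : 'M[C]_m) *t (1%:M : 'M[C]_n) = 1%:M.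
Proof.
apply/matrixP=> i j.
case: (mxtens_indexP i)=> i1 i2; case: (mxtens_indexP j)=> j1 j2.
rewrite tensmxE !mxE (inj_eq (can_inj (@mxtens_indexK m n))) xpair_eqE.
by case: (i1 == j1); case: (i2 == j2); rewrite ?mulr1 ?mulr0.
Qed.

Lemma unitary_tens1 m n (U : 'M[C]_n) :
  unitary U -> unitary ((1%:M : 'M[C]_m) *t U).
Proof. by move=> uU; rewrite /unitary adjmx_tens adjmx1 tensmx_mul mulmx1 uU tensmx11. Qed.

Lemma unitary_row_norm n (V : 'M[C]_n) k : unitary V -> \sum_j `|V k j| ^+ 2 = 1.
Proof.
move/matrixP/(_ k k); rewrite !mxE eqxx /= => rowV.
rewrite -[RHS]rowV; apply: eq_bigr=> j _.
by rewrite sqr_normc !mxE.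
Qed.

Lemma unitary_entry_le1 n (V : 'M[C]_n) k j : unitary V -> `|V k j| <= 1.
Proof.
move=> /(unitary_row_norm k) rowV.
rewrite -(@ler_pXn2r _ 2) ?nnegrE // expr1n -rowV (bigD1 j) //= lerDl.
by apply: sumr_ge0=> i _; rewrite exprn_ge0.
Qed.

Lemma frob_proj_diff n (x y : 'cV[C]_n) :
  adjmx x *m x = 1%:M -> adjmx y *m y = 1%:M ->
  \tr (adjmx (x *m adjmx x - y *m adjmx y) *m (x *m adjmx x - y *m adjmx y)) =
  2 - 2 * `|(adjmx x *m y) 0 0| ^+ 2.
Proof.
move=> xx yy.
have proj_adj (v : 'cV[C]_n) : adjmx (v *m adjmx v) = v *m adjmx v.
  by rewrite adjmx_mul adjmxK.
have tr_outer (u v w z : 'cV[C]_n) : \tr (u *m adjmx v *m (w *m adjmx z)) =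
    (adjmx v *m w) 0 0 * (adjmx z *m u) 0 0.
  by rewrite -mulmxA mxtrace_mulC trace_mx11 !mulmxA -(mulmxA _ (adjmx z)) mxE big_ord1.
have yx : (adjmx y *m x) 0 0 = ((adjmx x *m y) 0 0)^*.
  by rewrite -{1}(adjmxK x) -adjmx_mul !mxE.
have trB (A B : 'M[C]_n) : \tr (A - B) = \tr A - \tr B by rewrite raddfB.
rewrite adjmxB !proj_adj mulmxBl !mulmxBr.
rewrite [LHS]trB !{1}[in LHS]trB ![in LHS]tr_outer.
rewrite xx yy yx !mxE /= sqr_normc; ring.
Qed.

End Adjoint.

Section TensorCoefficients.
Variable R : rcfType.
Local Notation C := R[i].

Lemma sum_mxtens_index m n (F : 'I_(m * n) -> C) :
  \sum_p F p = \sum_(i < m) \sum_(j < n) F (mxtens_index (i, j)).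
Proof.
rewrite pair_big /=; apply: reindex.
exists (@mxtens_unindex m n)=> k _; rewrite -surjective_pairing.
  exact: mxtens_indexK.
exact: mxtens_unindexK.
Qed.

(* The coefficient matrix of [x] in the product basis:
   [x = \sum_(i, j) coefmx x i j e_i (x) f_j]. *)
Definition coefmx m n (x : 'cV[C]_(m * n)) : 'M[C]_(m, n) :=
  \matrix_(i, j) x (mxtens_index (i, j)) 0.

Lemma form_tens1mx m n (x y : 'cV[C]_(m * n)) (U : 'M[C]_n) :
  (adjmx x *m ((1%:M : 'M[C]_m) *t U) *m y) 0 0 =
  \tr (adjmx (coefmx x) *m coefmx y *m U^T).
Proof.
transitivity (\sum_(i < m) \sum_(j < n) \sum_(k < n)
   (x (mxtens_index (i, j)) 0)^* * U j k * y (mxtens_index (i, k)) 0).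
  rewrite mxE sum_mxtens_index; apply: eq_bigr=> i _.
  rewrite exchange_big /=; apply: eq_bigr=> k _.
  rewrite mxE sum_mxtens_index (bigD1 i) //= [X in _ + X]big1 ?addr0; last first.
    move=> i' i'i; rewrite big1 ?mul0r // => j _.
    by rewrite tensmxE !mxE (negPf i'i) mul0r mulr0.
  rewrite mulr_suml; apply: eq_bigr=> j _.
  by rewrite tensmxE !mxE eqxx mul1r.
rewrite /mxtrace exchange_big /=; apply: eq_bigr=> j _.
rewrite mxE exchange_big /=; apply: eq_bigr=> k _.
rewrite !mxE mulr_suml; apply: eq_bigr=> i _.
by rewrite !mxE mulrAC.
Qed.

Lemma ptraceA_outer m n (x y : 'cV[C]_(m * n)) :
  ptraceA (x *m adjmx y) = (coefmx x)^T *m map_mx conjc (coefmx y).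
Proof.
apply/matrixP=> j l; rewrite !mxE; apply: eq_bigr=> i _.
by rewrite !mxE big_ord1 !mxE.
Qed.

Lemma ptraceAD m n (A B : 'M[C]_(m * n)) : ptraceA (A + B) = ptraceA A + ptraceA B.
Proof.
apply/matrixP=> j l; rewrite !mxE -big_split.
by apply: eq_bigr=> i _; rewrite mxE.
Qed.

Lemma ptraceAZ m n c (A : 'M[C]_(m * n)) : ptraceA (c *: A) = c *: ptraceA A.
Proof.
apply/matrixP=> j l; rewrite !mxE mulr_sumr.
by apply: eq_bigr=> i _; rewrite mxE.
Qed.

Lemma ptraceA1 m n : ptraceA (1%:M : 'M[C]_(m * n)) = m%:R *: 1%:M.
Proof.
apply/matrixP=> j l; rewrite !mxE.
under eq_bigr do rewrite mxE (inj_eq (can_inj (@mxtens_indexK m n))) xpair_eqE eqxx.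
by rewrite sumr_const card_ord mulr_natl.
Qed.

Lemma coefmx_schmidt m n (a : 'I_n -> R) (EA : 'M[C]_(m, n)) (EB : 'M[C]_n) :
  coefmx (schmidt_vec a EA EB) = EA *m diag_mx (\row_k (a k)%:C) *m EB^T.
Proof.
apply/matrixP=> i j; rewrite mxE [RHS]mxE /schmidt_vec summxE.
apply: eq_bigr=> k _.
by rewrite mul_mx_diag !mxE mxtens_indexK /= mulrCA mulrA.
Qed.

End TensorCoefficients.

Lemma big_ord_split3 (V : nmodType) n (F : 'I_n -> V) (j : 'I_n) :
  \sum_k F k =
  \sum_(k : 'I_n | (k < j)%N) F k + F j + \sum_(k : 'I_n | (j < k)%N) F k.
Proof.
rewrite (bigID (fun k : 'I_n => (k < j)%N)) /= -addrA; congr (_ + _).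
rewrite (bigD1 j) /= ?ltnn //; congr (_ + _).
by apply: eq_bigl=> k; rewrite -val_eqE /=; case: ltngtP.
Qed.

Section UnitCirclePhases.
Variable R : rcfType.
Local Notation C := R[i].

Lemma sqr_norm_complex (x y : R) : `|x +i* y| ^+ 2 = (x ^+ 2 + y ^+ 2)%:C.
Proof. by rewrite sqr_normc /=; congr (_ +i* _); ring. Qed.

(* Law of cosines: [x = cos theta] for the angle [theta] with [|A + B e^(i theta)| = Cc]. *)
Lemma triangle_cosine (A B Cc : R) :
  0 <= A -> 0 <= B -> 0 <= Cc -> A + B + Cc = 1 ->
  A <= 1 / 2 -> B <= 1 / 2 -> Cc <= 1 / 2 ->
  exists2 x, x ^+ 2 <= 1 & A ^+ 2 + 2 * A * B * x + B ^+ 2 = Cc ^+ 2.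
Proof.
move=> hA hB hC hs hA2 hB2 hC2.
have [AB0|ABn0] := eqVneq (A * B) 0.
  exists 0; first by rewrite expr0n ler01.
  move/eqP: AB0; rewrite mulf_eq0 => /orP[/eqP A0|/eqP B0].
    by rewrite A0 (_ : B = Cc); [ring | lra].
  by rewrite B0 (_ : A = Cc); [ring | lra].
have AB_gt0 : 0 < A * B by rewrite lt_def ABn0 mulr_ge0.
pose num := Cc ^+ 2 - A ^+ 2 - B ^+ 2.
exists (num / (2 * (A * B))); last first.
  by rewrite /num; field; move: ABn0; rewrite mulf_eq0 negb_or andbC.
have den_gt0 : 0 < (2 * (A * B)) ^+ 2 by rewrite exprn_gt0 // mulr_gt0.
rewrite exprMn exprVn ler_pdivrMr // mul1r -subr_ge0.
have -> : (2 * (A * B)) ^+ 2 - num ^+ 2 = (1 - 2 * Cc) * (1 - 2 * A) * (1 - 2 * B).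
  by rewrite /num (_ : Cc = 1 - A - B); [ring | lra].
by apply: mulr_ge0; first apply: mulr_ge0; lra.
Qed.


Lemma triangle_phases (A B Cc : R) :
  0 <= A -> 0 <= B -> 0 <= Cc -> A + B + Cc = 1 ->
  A <= 1 / 2 -> B <= 1 / 2 -> Cc <= 1 / 2 ->
  exists v w : C, [/\ `|v| = 1, `|w| = 1 & A%:C + B%:C * v + Cc%:C * w = 0].
Proof.
move=> hA hB hC hs hA2 hB2 hC2.
have [x x2_le1 cosine] := triangle_cosine hA hB hC hs hA2 hB2 hC2.
have y2 : Num.sqrt (1 - x ^+ 2) ^+ 2 = 1 - x ^+ 2 by rewrite sqr_sqrtr ?subr_ge0.
pose v := x +i* Num.sqrt (1 - x ^+ 2).
have v_norm : `|v| = 1.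
  apply/eqP; rewrite -(@eqrXn2 _ 2) // expr1n sqr_norm_complex y2.
  by apply/eqP; congr (_%:C); ring.
pose z := A%:C + B%:C * v.
have z_norm : `|z| = Cc%:C.
  apply/eqP; rewrite -(@eqrXn2 _ 2) ?normr_ge0 ?lecR //.
  have -> : z = (A + B * x) +i* (B * Num.sqrt (1 - x ^+ 2)).
    by rewrite /z /v /=; congr (_ +i* _); ring.
  by rewrite sqr_norm_complex -rmorphXn exprMn y2 -cosine; apply/eqP; congr (_%:C); ring.
have [C0|Cn0] := eqVneq Cc 0.
  exists v; exists 1; rewrite normr1 -/z C0 mul0r addr0; split=> //.
  by apply: normr0_eq0; rewrite z_norm C0.
have Cn0_C : Cc%:C != 0 by apply: contra Cn0 => /eqP[->].
exists v; exists (- z / Cc%:C); rewrite -/z; split=> //.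
  by rewrite normrM normrN normfV z_norm ger0_norm ?lecR // divff.
by rewrite mulrC divfK // addrN.
Qed.

Lemma half_split_index n (l : 'I_n -> R) : (0 < n)%N ->
  (forall k, 0 <= l k) -> \sum_k l k = 1 ->
  exists j : 'I_n,
    \sum_(k : 'I_n | (k < j)%N) l k <= 1 / 2 /\ \sum_(k : 'I_n | (j < k)%N) l k <= 1 / 2.
Proof.
move=> n_gt0 l_ge0 l_sum.
pose S (j : 'I_n) := \sum_(k : 'I_n | (k < j)%N) l k.
have S0 : S (Ordinal n_gt0) <= 1 / 2 by rewrite /S big1 ?divr_ge0 ?ler01.
(* [j] is the last index at which the prefix sums stay below one half. *)
have [j Sj j_max] := @arg_maxnP _ _ (fun j => S j <= 1 / 2) val S0.
exists j; split=> //.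
case: (ltnP j.+1 n) => [lt_jn|le_nj]; last first.
  rewrite big1 ?divr_ge0 ?ler01 // => k lt_jk.
  by have := ltn_ord k; rewrite ltnNge (leq_trans le_nj lt_jk).
have Sj1 : S (Ordinal lt_jn) = S j + l j.
  rewrite /S (bigD1 j) //= addrC; congr (_ + _).
  by apply: eq_bigl=> k; rewrite -val_eqE /= ltnS; case: ltngtP.
have : 1 / 2 < S (Ordinal lt_jn).
  by rewrite ltNge; apply/negP=> /j_max; rewrite /= ltnn.
have := big_ord_split3 l j; rewrite l_sum -/(S j); lra.
Qed.

Lemma unimodular_phases_sum0 n (l : 'I_n -> R) : (0 < n)%N ->
  (forall k, 0 <= l k) -> \sum_k l k = 1 -> (forall k, l k <= 1 / 2) ->
  exists p : 'rV[C]_n, (forall k, `|p 0 k| = 1) /\ \sum_k (l k)%:C * p 0 k = 0.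
Proof.
move=> n_gt0 l_ge0 l_sum l_le.
have [j [Aj Cj]] := half_split_index n_gt0 l_ge0 l_sum.
have l3 := big_ord_split3 l j; rewrite l_sum in l3.
have [v [w [v1 w1 vw0]]] := triangle_phases (sumr_ge0 _ (fun k _ => l_ge0 k))
  (l_ge0 j) (sumr_ge0 _ (fun k _ => l_ge0 k)) (esym l3) Aj (l_le j) Cj.
exists (\row_k (if (k < j)%N then 1 else if k == j then v else w)); split.
  by move=> k; rewrite mxE; case: ifP => _; [rewrite normr1 | case: ifP].
rewrite (big_ord_split3 _ j) -[RHS]vw0 !rmorph_sum mulr_suml.
congr (_ + _ + _); first by apply: eq_bigr=> k lt_kj; rewrite mxE lt_kj mulr1.
  by rewrite mxE ltnn eqxx.
by apply: eq_bigr=> k lt_jk; rewrite mxE ltnNge (ltnW lt_jk) -val_eqE /= gtn_eqF.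
Qed.

End UnitCirclePhases.

Section SchmidtState.
Variable R : rcfType.
Local Notation C := R[i].
Variables (M N : nat) (eps : R) (a : 'I_N -> R) (EA : 'M[C]_(M, N)) (EB : 'M[C]_N).
Hypothesis EA_isometry : adjmx EA *m EA = 1%:M.
Hypothesis EB_unitary : adjmx EB *m EB = 1%:M.
Hypothesis a_ge0 : forall k, 0 <= a k.
Hypothesis a_sum : \sum_k a k ^+ 2 = 1.

Local Notation psi := (schmidt_vec a EA EB).
Local Notation rho := (iso_state eps psi).

Definition schmidt_weights : 'M[C]_N := diag_mx (\row_k (a k ^+ 2)%:C).

Definition reduced_schmidt : 'M[C]_N := EB *m schmidt_weights *m adjmx EB.

Definition overlap (U : 'M[C]_N) : C := (adjmx psi *m ((1%:M : 'M[C]_M) *t U) *m psi) 0 0.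

Definition schmidt_frame (U : 'M[C]_N) : 'M[C]_N := adjmx EB *m U *m EB.

Definition phase_unitary (p : 'rV[C]_N) : 'M[C]_N := EB *m diag_mx p *m adjmx EB.

Lemma unitary_EB : unitary EB.
Proof. exact: mulmx1C. Qed.

Local Notation Da := (diag_mx (\row_k (a k)%:C)).

Lemma schmidt_weightsE : Da *m Da = schmidt_weights.
Proof. by rewrite mulmx_diag; congr diag_mx; apply/rowP=> k; rewrite !mxE -rmorphM expr2. Qed.

Lemma coefmx_schmidt_gram :
  adjmx (coefmx psi) *m coefmx psi = map_mx conjc EB *m schmidt_weights *m EB^T.
Proof.
rewrite coefmx_schmidt !adjmx_mul adjmx_diag_real adjmx_tr.
rewrite -!mulmxA (mulmxA (adjmx EA)) EA_isometry mul1mx !mulmxA.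
by rewrite -(mulmxA _ _ (diag_mx _)) schmidt_weightsE.
Qed.

Lemma overlapE U : overlap U = \sum_k (a k ^+ 2)%:C * schmidt_frame U k k.
Proof.
rewrite /overlap form_tens1mx coefmx_schmidt_gram -!mulmxA mxtrace_mulC !mulmxA.
rewrite -(mulmxA schmidt_weights) -(mulmxA schmidt_weights).
have -> : EB^T *m U^T *m map_mx conjc EB = (schmidt_frame U)^T.
  by rewrite /schmidt_frame !trmx_mul /adjmx trmxK mulmxA.
by rewrite /mxtrace; apply: eq_bigr=> k _; rewrite mul_diag_mx !mxE.
Qed.

Lemma schmidt_frame_unitary U : unitary U -> unitary (schmidt_frame U).
Proof.
move=> uU; rewrite /unitary /schmidt_frame !adjmx_mul adjmxK !mulmxA.
by rewrite -(mulmxA _ EB) unitary_EB mulmx1 -(mulmxA _ U) uU mulmx1 EB_unitary.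
Qed.

Lemma schmidt_vec_unit : adjmx psi *m psi = 1%:M.
Proof.
apply/matrixP=> i j; rewrite !ord1.
have := overlapE 1%:M; rewrite /overlap tensmx11 mulmx1 => ->.
rewrite /schmidt_frame mulmx1 EB_unitary mxE /=.
under eq_bigr do rewrite mxE eqxx mulr1.
by rewrite -rmorph_sum a_sum.
Qed.

Lemma ptraceA_schmidt : ptraceA (psi *m adjmx psi) = reduced_schmidt.
Proof.
have Da_conj : map_mx conjc Da = Da.
  by rewrite map_diag_mx; congr diag_mx; apply/rowP=> k; rewrite !mxE; apply: conjc_real.
have EA_orth : EA^T *m map_mx conjc EA = 1%:M.
  by rewrite -[map_mx _ EA]trmxK -trmx_mul -[_^T *m EA]/(adjmx EA *m EA) EA_isometry trmx1.
rewrite ptraceA_outer coefmx_schmidt !trmx_mul !map_mxM tr_diag_mx Da_conj trmxK.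
rewrite /reduced_schmidt -schmidt_weightsE !mulmxA -(mulmxA (EB *m Da) EA^T) EA_orth mulmx1.
by rewrite /adjmx map_trmx.
Qed.

Lemma ptraceA_iso_state :
  ptraceA rho = eps%:C *: reduced_schmidt + (((1 - eps) / (M * N)%:R)%:C * M%:R) *: 1%:M.
Proof.
by rewrite /iso_state ptraceAD !ptraceAZ ptraceA_schmidt ptraceA1 scalerA.
Qed.

(* The maximally mixed part of [rho] commutes with everything. *)
Lemma cyclic_for_isoE U : eps != 0 ->
  cyclic_for rho U <-> unitary U /\ reduced_schmidt *m U = U *m reduced_schmidt.
Proof.
move=> eps_neq0; rewrite /cyclic_for ptraceA_iso_state mulmxDl mulmxDr.
rewrite -!scalemxAl -!scalemxAr mul1mx mulmx1.
split=> -[uU commU]; (split; first exact: uU); last by rewrite commU.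
move/addIr: commU; apply: scalerI.
by apply: contra eps_neq0 => /eqP[->].
Qed.

Lemma overlap_le1 U : unitary U -> `|overlap U| <= 1.
Proof.
move=> /schmidt_frame_unitary uV; rewrite overlapE.
apply: le_trans (ler_norm_sum _ _ _) _.
rewrite -(rmorph1 (real_complex R)) -a_sum rmorph_sum; apply: ler_sum=> k _.
have w_ge0 : 0 <= (a k ^+ 2)%:C :> C by rewrite lecR sqr_ge0.
by rewrite normrM ger0_norm // ler_piMr // unitary_entry_le1.
Qed.

Lemma fu_dist_overlap U : 0 <= eps -> unitary U ->
  fu_dist rho U = eps%:C * sqrtC (1 - `|overlap U| ^+ 2).
Proof.
move=> eps_ge0 uU; rewrite /fu_dist /frob.
set W := (1%:M : 'M[C]_M) *t U.
have WW : adjmx W *m W = 1%:M by apply: mulmx1C; apply: unitary_tens1.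
set phi := W *m psi.
have phi_unit : adjmx phi *m phi = 1%:M.
  by rewrite adjmx_mul mulmxA -(mulmxA _ (adjmx W)) WW mulmx1 schmidt_vec_unit.
have -> : rho - W *m rho *m adjmx W = eps%:C *: (psi *m adjmx psi - phi *m adjmx phi).
  rewrite /iso_state mulmxDr mulmxDl -!scalemxAr -!scalemxAl mulmx1 unitary_tens1 //.
  by rewrite /phi adjmx_mul !mulmxA scalerBr opprD addrACA subrr addr0.
rewrite adjmxZ conjc_real -scalemxAl -scalemxAr scalerA mxtraceZ.
rewrite frob_proj_diff ?schmidt_vec_unit //.
have -> : (adjmx psi *m phi) 0 0 = overlap U by rewrite /phi mulmxA.
have o_le1 : `|overlap U| ^+ 2 <= 1 by rewrite exprn_ile1 ?overlap_le1.
have -> : eps%:C * eps%:C * (2 - 2 * `|overlap U| ^+ 2) =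
    2 * (eps%:C ^+ 2 * (1 - `|overlap U| ^+ 2)) by ring.
rewrite sqrtCM ?nnegrE ?mulr_ge0 ?exprn_ge0 ?ler0n ?lecR ?subr_ge0 //.
rewrite sqrtCM ?nnegrE ?exprn_ge0 ?lecR ?subr_ge0 // sqrCK ?lecR //.
by rewrite mulrAC divff ?mul1r // sqrtC_eq0 pnatr_eq0.
Qed.

Lemma schmidt_frame_comm U : reduced_schmidt *m U = U *m reduced_schmidt ->
  schmidt_weights *m schmidt_frame U = schmidt_frame U *m schmidt_weights.
Proof.
move=> commU.
have weightsE : schmidt_weights = adjmx EB *m reduced_schmidt *m EB.
  by rewrite /reduced_schmidt !mulmxA EB_unitary mul1mx -mulmxA EB_unitary mulmx1.
have frameM X Y : (adjmx EB *m X *m EB) *m (adjmx EB *m Y *m EB) = adjmx EB *m (X *m Y) *m EB.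
  by rewrite !mulmxA -(mulmxA _ EB (adjmx EB)) unitary_EB mulmx1.
by rewrite weightsE /schmidt_frame !frameM commU.
Qed.

Lemma schmidt_frame_offdiag U m k : reduced_schmidt *m U = U *m reduced_schmidt ->
  a k ^+ 2 != a m ^+ 2 -> schmidt_frame U m k = 0.
Proof.
move=> /schmidt_frame_comm /matrixP /(_ m k) /eqP + km; set V := schmidt_frame U.
rewrite mul_diag_mx mul_mx_diag !mxE mulrC -subr_eq0 -mulrBr mulf_eq0 => /orP[/eqP //|].
by rewrite subr_eq0 (inj_eq (@complexI R)) eq_sym (negPf km).
Qed.

(* A unitary commuting with [schmidt_weights] preserves its eigenspaces, and a
   simple eigenvalue has a line as eigenspace. *)
Lemma schmidt_frame_simple U m : unitary U -> reduced_schmidt *m U = U *m reduced_schmidt ->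
  (forall k, k != m -> a k ^+ 2 != a m ^+ 2) -> `|schmidt_frame U m m| = 1.
Proof.
move=> uU commU simple_m.
have := unitary_row_norm m (schmidt_frame_unitary uU).
rewrite (bigD1 m) //= big1 ?addr0 => [row1|k km]; last first.
  by rewrite schmidt_frame_offdiag ?simple_m // normr0 expr0n.
by apply/eqP; rewrite -(@eqrXn2 _ 2) // row1 expr1n.
Qed.

Lemma weights_sum_off m : \sum_(k | k != m) (a k ^+ 2)%:C = 1 - (a m ^+ 2)%:C :> C.
Proof.
apply/esym; rewrite -(rmorph1 (real_complex R)) -a_sum rmorph_sum.
by rewrite (bigD1 m) //= addrC addrK.
Qed.

Lemma overlap_lower_bound U m : unitary U -> `|schmidt_frame U m m| = 1 ->
  (2 * a m ^+ 2 - 1)%:C <= `|overlap U|.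
Proof.
move=> uU Vmm; have uV := schmidt_frame_unitary uU.
have w_ge0 k : 0 <= (a k ^+ 2)%:C :> C by rewrite lecR sqr_ge0.
have rest : `|\sum_(k | k != m) (a k ^+ 2)%:C * schmidt_frame U k k| <= 1 - (a m ^+ 2)%:C.
  rewrite -weights_sum_off.
  apply: le_trans (ler_norm_sum _ _ _) _; apply: ler_sum=> k _.
  by rewrite normrM ger0_norm // ler_piMr // unitary_entry_le1.
rewrite overlapE (bigD1 m) //=; apply: le_trans (lerB_normD _ _).
rewrite normrM ger0_norm // Vmm mulr1; apply: le_trans (lerB (lexx _) rest).
suff -> : (a m ^+ 2)%:C - (1 - (a m ^+ 2)%:C) = (2 * a m ^+ 2 - 1)%:C :> C by [].
by rewrite rmorphB rmorphM rmorph1; ring.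
Qed.

Lemma phase_unitary_unitary (p : 'rV[C]_N) : (forall k, `|p 0 k| = 1) -> unitary (phase_unitary p).
Proof.
move=> p1; rewrite /unitary /phase_unitary !adjmx_mul adjmxK !mulmxA.
rewrite -(mulmxA _ (adjmx EB) EB) EB_unitary mulmx1 adjmx_diag -(mulmxA EB) mulmx_diag.
have -> : diag_mx (\row_j (p 0 j * map_mx conjc p 0 j)) = 1%:M.
  by apply/matrixP=> i j; rewrite !mxE -sqr_normc p1 expr1n.
by rewrite mulmx1 unitary_EB.
Qed.

Lemma phase_unitary_comm (p : 'rV[C]_N) :
  reduced_schmidt *m phase_unitary p = phase_unitary p *m reduced_schmidt.
Proof.
rewrite /reduced_schmidt /phase_unitary !mulmxA -(mulmxA _ (adjmx EB) EB) EB_unitary mulmx1.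
rewrite -(mulmxA EB schmidt_weights) diag_mxC.
by rewrite -(mulmxA _ (adjmx EB) EB) EB_unitary mulmx1 !mulmxA.
Qed.

Lemma overlap_phase_unitary (p : 'rV[C]_N) :
  overlap (phase_unitary p) = \sum_k (a k ^+ 2)%:C * p 0 k.
Proof.
rewrite overlapE /schmidt_frame /phase_unitary !mulmxA EB_unitary mul1mx -mulmxA EB_unitary mulmx1.
by apply: eq_bigr=> k _; rewrite mxE eqxx mulr1n.
Qed.

Hypothesis eps_gt0 : 0 < eps.

Lemma is_dmax_overlap_min (r : C) : 0 <= r ->
  (exists U, cyclic_for rho U /\ `|overlap U| = r) ->
  (forall U, cyclic_for rho U -> r <= `|overlap U|) ->
  is_dmax rho (eps%:C * sqrtC (1 - r ^+ 2)).
Proof.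
move=> r_ge0 [U0 [cU0 oU0]] r_min.
have eps_neq0 : eps != 0 by rewrite gt_eqF.
have cyclicE U := cyclic_for_isoE U eps_neq0.
have fuE U : cyclic_for rho U -> fu_dist rho U = eps%:C * sqrtC (1 - `|overlap U| ^+ 2).
  by case/cyclicE=> uU _; apply: fu_dist_overlap; rewrite // ltW.
split; first by exists U0; rewrite fuE // oU0.
move=> U cU; have [uU _] := (cyclicE U).1 cU.
have o_le1 := overlap_le1 uU; have r_le := r_min U cU.
rewrite fuE //; apply: ler_wpM2l; first by rewrite lecR ltW.
rewrite ler_sqrtC ?nnegrE ?subr_ge0 ?exprn_ile1 //.
- by rewrite lerD2l lerN2 ler_pXn2r ?nnegrE.
- exact: le_trans o_le1.
Qed.

Lemma dmax_flat : (0 < N)%N -> (forall k, a k ^+ 2 <= 1 / 2) -> is_dmax rho eps%:C.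
Proof.
move=> N_gt0 flat.
have [p [p1 p0]] := unimodular_phases_sum0 N_gt0 (fun k => sqr_ge0 (a k)) a_sum flat.
have -> : eps%:C = eps%:C * sqrtC (1 - 0 ^+ 2) by rewrite expr0n subr0 sqrtC1 mulr1.
apply: is_dmax_overlap_min; [exact: lexx | | by move=> U _; apply: normr_ge0].
exists (phase_unitary p); rewrite overlap_phase_unitary p0 normr0; split=> //.
apply/cyclic_for_isoE; first by rewrite gt_eqF.
by split; [apply: phase_unitary_unitary | apply: phase_unitary_comm].
Qed.

Lemma dmax_peaked m : 1 / 2 < a m ^+ 2 ->
  is_dmax rho (2 * eps * a m * Num.sqrt (1 - a m ^+ 2))%:C.
Proof.
move=> peak; set c := 2 * a m ^+ 2 - 1.
have eps_neq0 : eps != 0 by rewrite gt_eqF.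
have pair_le1 k : k != m -> a m ^+ 2 + a k ^+ 2 <= 1.
  move=> km; rewrite -a_sum (bigD1 m) //= lerD2l (bigD1 k) //= lerDl.
  by apply: sumr_ge0=> i _; apply: sqr_ge0.
have am_le1 : a m ^+ 2 <= 1.
  by rewrite -a_sum (bigD1 m) //= lerDl; apply: sumr_ge0=> i _; apply: sqr_ge0.
have c_ge0 : 0 <= c by rewrite /c; lra.
have -> : (2 * eps * a m * Num.sqrt (1 - a m ^+ 2))%:C = eps%:C * sqrtC (1 - c%:C ^+ 2).
  have -> : 1 - c%:C ^+ 2 = (2 * a m * Num.sqrt (1 - a m ^+ 2))%:C ^+ 2.
    rewrite -!rmorphXn -(rmorph1 (real_complex R)) -rmorphB !exprMn sqr_sqrtr ?subr_ge0 //.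
    by rewrite /c; congr (_%:C); ring.
  rewrite sqrCK ?lecR ?mulr_ge0 ?sqrtr_ge0 // -(rmorphM (real_complex R)).
  by congr (_%:C); ring.
apply: is_dmax_overlap_min; first by rewrite lecR.
  pose p : 'rV[C]_N := \row_k (if k == m then -1 else 1).
  exists (phase_unitary p); split.
    apply/(cyclic_for_isoE _ eps_neq0); split; last exact: phase_unitary_comm.
    by apply: phase_unitary_unitary=> k; rewrite mxE; case: ifP; rewrite ?normrN normr1.
  rewrite overlap_phase_unitary (bigD1 m) //= mxE eqxx mulrN1.
  have -> : \sum_(k | k != m) (a k ^+ 2)%:C * p 0 k = 1 - (a m ^+ 2)%:C.
    by rewrite -weights_sum_off; apply: eq_bigr=> k km; rewrite mxE (negPf km) mulr1.
  have -> : - (a m ^+ 2)%:C + (1 - (a m ^+ 2)%:C) = - c%:C.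
    by rewrite /c rmorphB rmorphM rmorph1; ring.
  by rewrite normrN ger0_norm ?lecR.
move=> U /(cyclic_for_isoE U eps_neq0) [uU commU].
apply: (overlap_lower_bound uU); apply: (schmidt_frame_simple uU commU) => k km.
by rewrite lt_eqF //; have := pair_le1 k km; lra.
Qed.

End SchmidtState.

Theorem theorem1 (R : rcfType) (M N : nat) (eps : R) (a : 'I_N -> R)
    (EA : 'M[R[i]]_(M, N)) (EB : 'M[R[i]]_N) :
  (N <= M)%N -> (1 <= N)%N ->
  0 < eps -> eps <= 1 ->
  (forall k, 0 <= a k) -> \sum_(k < N) a k ^+ 2 = 1 ->
  adjmx EA *m EA = 1%:M -> adjmx EB *m EB = 1%:M ->
  let am := \big[Num.max/0]_(k < N) a k in
  is_dmax (iso_state eps (schmidt_vec a EA EB))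
    (if am ^+ 2 <= 1 / 2 then eps%:C
     else (2 * eps * am * Num.sqrt (1 - am ^+ 2))%:C).
Proof.
move=> _ N_gt0 eps_gt0 _ a_ge0 a_sum EA_isometry EB_unitary am.
have [m _ am_eq] := eq_bigmax (Ordinal N_gt0) xpredT a erefl (fun k _ => a_ge0 k).
rewrite /am am_eq; case: ifPn => [flat | peaked].
  apply: dmax_flat => // k; apply: le_trans flat.
  have := le_bigmax 0 a k; rewrite am_eq => le_km.
  by rewrite ler_pXn2r ?nnegrE.
by apply: dmax_peaked => //; rewrite ltNge.
Qed.
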